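(* Let $\varrho$ be a three-qubit state on parties $A,B,C$ that can be prepared in the triangle network. If $\langle Z_AZ_B\rangle_\varrho+\langle Z_BZ_C\rangle_\varrho-1\ge 0$, then $$\langle X_AX_BX_C\rangle_\varrho^2+\big(\langle Z_AZ_B\rangle_\varrho+\langle Z_BZ_C\rangle_\varrho-1\big)^2\le 1.$$
   Context: $X,Y,Z$ are Pauli matrices; $X_AX_BX_C=\sigma_x\otimes\sigma_x\otimes\sigma_x$, $Z_AZ_B=\sigma_z\otimes\sigma_z\otimes\mathbb 1$, etc., and $\langle O\rangle_\varrho=\mathrm{Tr}(O\varrho)$. Triangle network: three sources $\varrho_a,\varrho_b,\varrho_c$ (finite-dimensional, arbitrary dimension), each bipartite, shared respectively by $BC$, $AC$, $AB$. A state can be prepared in the triangle network if $\varrho=\sum_\lambda p_\lambda\,\mathcal E_A^{(\lambda)}\otimes\mathcal E_B^{(\lambda)}\otimes\mathcal E_C^{(\lambda)}[\varrho_a\otimes\varrho_b\otimes\varrho_c]$ (subsystems suitably ordered), with a probability distribution $p_\lambda$ and quantum channels $\mathcal E_X^{(\lambda)}$ mapping the two subsystems received by party $X$ to a qubit. *)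

From HB Require Import structures.
From mathcomp Require Import all_boot all_order all_algebra.
From mathcomp.real_closed Require Import complex.
Set Implicit Arguments. Unset Strict Implicit. Unset Printing Implicit Defensive.
Import Order.TTheory GRing.Theory Num.Theory.
Local Open Scope ring_scope.

Section Quantum.
Variable R : rcfType.
Local Notation C := R[i].

Definition op (I : finType) := I -> I -> C.

(* positive semidefinite: <v|rho|v> >= 0 for every vector v (the order on C:
   0 <= z iff z is real and nonnegative) *)
Definition psd (I : finType) (rho : op I) : Prop :=
  forall v : I -> C, 0 <= \sum_i \sum_j conjc (v i) * rho i j * v j.

Definition trace (I : finType) (rho : op I) : C := \sum_i rho i i.

Definition is_state (I : finType) (rho : op I) : Prop :=
  psd rho /\ trace rho = 1.

Definition expect (I : finType) (O rho : op I) : C :=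
  \sum_i \sum_j O i j * rho j i.

(* A quantum channel from C^I to a qubit C^bool, in Kraus (operator-sum) form:
   Kraus operators K k : bool x I matrices, sum_k K_k^dagger K_k = 1. *)
Definition is_channel (K I : finType) (E : K -> bool -> I -> C) : Prop :=
  forall i j : I, \sum_k \sum_o conjc (E k o i) * E k o j = (i == j)%:R.

(* Pauli matrices (basis index false = |0>, true = |1>) and identity *)
Definition pauliX : op bool := fun i j => (i != j)%:R.
Definition pauliZ : op bool :=
  fun i j => if i == j then (if i then -1 else 1) else 0.
Definition id2 : op bool := fun i j => (i == j)%:R.

Definition tens3 (P Q S : op bool) : op (bool * bool * bool)%type :=
  fun x y => P x.1.1 y.1.1 * Q x.1.2 y.1.2 * S x.2 y.2.

(* Source a (shared by B,C) lives on aB x aC,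
   source b (shared by A,C) on bA x bC, source c (shared by A,B) on cA x cB.
   Party A receives bA x cA, party B receives aB x cB, party C receives aC x bC.
   tri_out computes (E_A (x) E_B (x) E_C)[rho_a (x) rho_b (x) rho_c] with the
   subsystems reordered accordingly, each channel given by Kraus operators. *)
Definition tri_out (aB aC bA bC cA cB KA KB KC : finType)
  (EA : KA -> bool -> (bA * cA)%type -> C)
  (EB : KB -> bool -> (aB * cB)%type -> C)
  (EC : KC -> bool -> (aC * bC)%type -> C)
  (rhoa : op (aB * aC)%type) (rhob : op (bA * bC)%type) (rhoc : op (cA * cB)%type)
  : op (bool * bool * bool)%type :=
  fun x y =>
    \sum_(kA : KA) \sum_(kB : KB) \sum_(kC : KC)
    \sum_(i : ((bA * cA) * (aB * cB) * (aC * bC))%type)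
    \sum_(j : ((bA * cA) * (aB * cB) * (aC * bC))%type)
      (EA kA x.1.1 i.1.1 * EB kB x.1.2 i.1.2 * EC kC x.2 i.2) *
      (rhoa (i.1.2.1, i.2.1) (j.1.2.1, j.2.1) *
       rhob (i.1.1.1, i.2.2) (j.1.1.1, j.2.2) *
       rhoc (i.1.1.2, i.1.2.2) (j.1.1.2, j.1.2.2)) *
      (conjc (EA kA y.1.1 j.1.1) * conjc (EB kB y.1.2 j.1.2) *
       conjc (EC kC y.2 j.2)).

(* rho can be prepared in the triangle network: fixed sources of arbitrary
   finite dimension, and a (finite) probability distribution p over lambda of
   products of local channels. *)
Definition triangle_preparable (rho : op (bool * bool * bool)%type) : Prop :=
  exists (aB aC bA bC cA cB : finType)
         (rhoa : op (aB * aC)%type) (rhob : op (bA * bC)%type) (rhoc : op (cA * cB)%type),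
    [/\ is_state rhoa, is_state rhob & is_state rhoc] /\
  exists (L KA KB KC : finType) (p : L -> R)
         (EA : L -> KA -> bool -> (bA * cA)%type -> C)
         (EB : L -> KB -> bool -> (aB * cB)%type -> C)
         (EC : L -> KC -> bool -> (aC * bC)%type -> C),
    [/\ (forall l, 0 <= p l), \sum_l p l = 1,
        (forall l, is_channel (EA l) /\ is_channel (EB l) /\ is_channel (EC l)) &
        forall x y, rho x y =
          \sum_l ((p l)%:C)%C * tri_out (EA l) (EB l) (EC l) rhoa rhob rhoc x y].

End Quantum.

From HB Require Import structures.
From mathcomp Require Import all_boot all_order all_algebra.
From mathcomp.real_closed Require Import complex.
From mathcomp Require Import sesquilinear spectral.
From mathcomp.algebra_tactics Require Import ring lra.
Import Order.TTheory GRing.Theory Num.Theory.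
Set Implicit Arguments. Unset Strict Implicit. Unset Printing Implicit Defensive.
Local Open Scope ring_scope.
Local Notation Re := complex.Re.

(* For a fixed value of the shared randomness the output state rho has three
   properties.  (i) As for every three-qubit state, <XXX>^2 + <ZII>^2 <= 1: XXX only
   couples the blocks A = 0 and A = 1 of rho, and Cauchy-Schwarz bounds that coupling by
   the product of the block weights (1 + <ZII>)/2 and (1 - <ZII>)/2.  (ii) Inflation:
   replacing source b by the product of its two marginals changes neither <ZZI> nor
   <IZZ>, since the pairs A,B and B,C each see only one half of b, but it makes <ZIZ>
   factor as <ZII><IIZ>.  Together with the pointwise inequality ab + bc - ac <= 1 for
   signs, evaluated in the inflated state, this gives <ZZI> + <IZZ> - 1 <= |<ZII>|.
   These expectations are computed in the Heisenberg picture: the local observables are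
   pulled back through the channels to the sources, where idle parties only see
   marginals.  (iii) The points (x, e) with x^2 + a^2 <= 1 and e <= |a| lie in the convex
   set {(x, e) | |x| <= 1, e <= sqrt (1 - x^2)}, so the mixture over the shared
   randomness satisfies x^2 + e^2 <= 1 whenever e >= 0. *)

Lemma sum_delta_mull (T : pzSemiRingType) (I : finType) (j : I) (F : I -> T) :
  \sum_i (i == j)%:R * F i = F j.
Proof.
rewrite (bigD1 j) //= eqxx mul1r big1 ?addr0 // => i /negbTE ->.
by rewrite mul0r.
Qed.

Lemma sum_delta_mull_sym (T : pzSemiRingType) (I : finType) (j : I) (F : I -> T) :
  \sum_i (j == i)%:R * F i = F j.
Proof. by under eq_bigr do rewrite eq_sym; apply: sum_delta_mull. Qed.

Lemma sum_pair (T : nmodType) (I J : finType) (F : (I * J)%type -> T) :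
  \sum_p F p = \sum_i \sum_j F (i, j).
Proof. by rewrite pair_bigA; apply: eq_bigr => -[]. Qed.

Lemma sum_pair_mul (T : pzSemiRingType) (I J : finType) (F : I -> T) (G : J -> T) :
  (\sum_i F i) * (\sum_j G j) = \sum_(p : I * J) F p.1 * G p.2.
Proof. by rewrite big_distrlr pair_bigA. Qed.

Lemma exchange_big2 (T : nmodType) (I1 I2 J1 J2 : finType)
    (F : I1 -> I2 -> J1 -> J2 -> T) :
  \sum_i1 \sum_i2 \sum_j1 \sum_j2 F i1 i2 j1 j2 =
  \sum_j1 \sum_j2 \sum_i1 \sum_i2 F i1 i2 j1 j2.
Proof.
rewrite pair_bigA /=; under eq_bigr => p _ do rewrite pair_bigA /=.
rewrite exchange_big /= [RHS]pair_bigA /=.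
by apply: eq_bigr => q _; rewrite pair_bigA.
Qed.

Lemma sign_chain_le1 (R : realDomainType) (a b c : bool) :
  (-1) ^+ a * (-1) ^+ b + (-1) ^+ b * (-1) ^+ c - (-1) ^+ a * (-1) ^+ c <= 1 :> R.
Proof. by case: a b c => [] [] []; rewrite /= ?expr0 ?expr1; lra. Qed.

Lemma convex_disk_bound (R : rcfType) (L : finType) (p x a e : L -> R) :
  (forall l, 0 <= p l) -> \sum_l p l = 1 ->
  (forall l, x l ^+ 2 + a l ^+ 2 <= 1) -> (forall l, e l <= `|a l|) ->
  0 <= \sum_l p l * e l ->
  (\sum_l p l * x l) ^+ 2 + (\sum_l p l * e l) ^+ 2 <= 1.
Proof.
move=> p_ge0 p_sum1 xa_le1 e_le_a E_ge0.
set X := \sum_l p l * x l; set E := \sum_l p l * e l; set m := X ^+ 2 + E ^+ 2.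
have m_ge0 : 0 <= m by rewrite addr_ge0 ?sqr_ge0.
(* m is the p-average of the X * x l + E * e l, each at most sqrt m by
   Cauchy-Schwarz in the plane. *)
have term_le l : X * x l + E * e l <= Num.sqrt m.
  set w := `|X| * `|x l| + E * `|a l|.
  have w_ge0 : 0 <= w by rewrite addr_ge0 ?mulr_ge0.
  apply: (@le_trans _ _ w); first by rewrite lerD ?ler_wpM2l // -normrM ler_norm.
  rewrite -(ger0_norm w_ge0) -sqrtr_sqr ler_sqrt // /w /m.
  have := xa_le1 l; have := sqr_ge0 (`|X| * `|a l| - E * `|x l|); move: m_ge0; rewrite /m.
  rewrite -(real_normK (num_real X)) -(real_normK (num_real (x l))).
  rewrite -(real_normK (num_real (a l))).
  move: `|X| `|x l| `|a l| => nX nx na; nra.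
have m_le_sqrt : m <= Num.sqrt m.
  have mE : m = \sum_l p l * (X * x l + E * e l).
    rewrite /m !expr2 {2}/X {2}/E !mulr_sumr -big_split; apply: eq_bigr => l _ /=; ring.
  rewrite [X in X <= _]mE -[X in _ <= X]mul1r -p_sum1 mulr_suml.
  by apply: ler_sum => l _; apply: ler_wpM2l.
move: (Num.sqrt m) (sqrtr_ge0 m) (sqr_sqrtr m_ge0) m_le_sqrt => t t_ge0 <-; nra.
Qed.

Section Operators.
Variable R : rcfType.
Local Notation C := R[i].
Implicit Types (I J : finType).

Lemma conjcE (z : C) : conjc z = z^*.
Proof.
have [->|nz] := eqVneq z 0; first by rewrite conjc0 conjC0.
by apply: (mulfI nz); rewrite -sqr_normc normCK.
Qed.

Lemma Re_realM (r : R) (z : C) : Re (r%:C%C * z) = r * Re z.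
Proof. by case: z => a b /=; rewrite mul0r subr0. Qed.

Definition hermitian I (K : op R I) := forall i j, K j i = (K i j)^*.

Definition sesq I (K : op R I) (u w : I -> C) : C :=
  \sum_i \sum_j (u i)^* * K i j * w j.

Lemma psdE I (K : op R I) : psd K <-> forall u, 0 <= sesq K u u.
Proof.
suff E u : \sum_i \sum_j conjc (u i) * K i j * u j = sesq K u u.
  by split=> H u; have := H u; rewrite E.
by apply: eq_bigr => i _; apply: eq_bigr => j _; rewrite conjcE.
Qed.

Lemma sesq_comb I (K : op R I) (u w : I -> C) (a b : C) :
  let v i := a * u i + b * w i in
  sesq K v v = a^* * a * sesq K u u + a^* * b * sesq K u w
             + b^* * a * sesq K w u + b^* * b * sesq K w w.
Proof.
rewrite /sesq !mulr_sumr -!big_split /=; apply: eq_bigr => i _.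
rewrite !mulr_sumr -!big_split /=; apply: eq_bigr => j _.
rewrite rmorphD !rmorphM /=; ring.
Qed.

Lemma sesq_delta I (K : op R I) (i j : I) :
  sesq K (fun k => (k == i)%:R) (fun k => (k == j)%:R) = K i j.
Proof.
rewrite /sesq (eq_bigr (fun k => (k == i)%:R * \sum_l (l == j)%:R * K k l)).
  by rewrite !sum_delta_mull.
by move=> k _; rewrite mulr_sumr; apply: eq_bigr => l _; rewrite conjC_nat; ring.
Qed.

Lemma psd_diag_ge0 I (K : op R I) (i : I) : psd K -> 0 <= K i i.
Proof. by move=> /psdE /(_ (fun k => (k == i)%:R)); rewrite sesq_delta. Qed.

Lemma psd_hermitian I (K : op R I) : psd K -> hermitian K.
Proof.
(* The quadratic form is real at e_i + e_j and at e_i + 'i e_j. *)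
move=> pK i j; have /psdE sK := pK.
have /CrealP E1 := ger0_real (sK (fun k => 1 * (k == i)%:R + 1 * (k == j)%:R)).
have /CrealP E2 := ger0_real (sK (fun k => 1 * (k == i)%:R + 'i * (k == j)%:R)).
move: E1 E2; rewrite !sesq_comb !sesq_delta !rmorphD !rmorphM /= !conjCK conjCi conjC1.
rewrite !(CrealP (ger0_real (psd_diag_ge0 _ pK))).
set a := K i j; set b := K j i => E1 E2.
have D1 : a^* + b^* - a - b = 0 by move/eqP: E1; rewrite -subr_eq0 => /eqP <-; ring.
have /eqP : 'i * (b^* - a^* - a + b) = 0.
  by move/eqP: E2; rewrite -subr_eq0 => /eqP <-; ring.
rewrite mulf_eq0 (negbTE (neq0Ci _)) /= => /eqP D2.
have : 2 * (b^* - a) = 0 by rewrite -[RHS](addr0 0) -{1}D1 -D2; ring.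
move=> /eqP; rewrite mulf_eq0 pnatr_eq0 /= subr_eq0 => /eqP <-.
by rewrite conjCK.
Qed.

Lemma sesq_conj I (K : op R I) (u w : I -> C) : hermitian K ->
  sesq K w u = (sesq K u w)^*.
Proof.
move=> hK; rewrite /sesq rmorph_sum exchange_big /=; apply: eq_bigr => j _.
rewrite rmorph_sum; apply: eq_bigr => i _.
by rewrite !rmorphM /= conjCK -hK; ring.
Qed.

Lemma psd_cauchy_schwarz I (K : op R I) (u w : I -> C) : psd K ->
  `|sesq K u w| ^+ 2 <= sesq K u u * sesq K w w.
Proof.
move=> pK; have /psdE sK := pK.
set z := sesq K u w; set a := sesq K u u; set b := sesq K w w.
have [a0 b0] : 0 <= a /\ 0 <= b by split; apply: sK.
have [ar br] : a^* = a /\ b^* = b by split; apply/CrealP/ger0_real.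
have quad l : 0 <= a + l * z + l^* * z^* + l^* * l * b.
  have := sK (fun i => 1 * u i + l * w i).
  by rewrite sesq_comb (sesq_conj u w (psd_hermitian pK)) conjC1 !mul1r !mulr1.
rewrite normCK; have [->|z0] := eqVneq z 0; first by rewrite mul0r mulr_ge0.
have [b_eq0|b_neq0] := eqVneq b 0.
  have := quad (- (a + 1) / z); rewrite b_eq0 mulr0 addr0.
  rewrite rmorphM rmorphN rmorphD fmorphV /= ar conjC1 !divfK ?conjC_eq0 //.
  rewrite (_ : a - _ - _ = - (a + 2)); last by ring.
  by rewrite oppr_ge0 => /(le_trans (ler_wpDl a0 (lexx 2))); rewrite lern0.
have b_gt0 : 0 < b by rewrite lt_def b_neq0.
have := quad (- z^* / b); rewrite rmorphM rmorphN fmorphV /= conjCK br.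
rewrite (_ : _ + _ = a - z * z^* / b); last by field.
by rewrite subr_ge0 ler_pdivrMr // mulrC.
Qed.

Lemma psd_entry_cauchy_schwarz I (K : op R I) (i j : I) : psd K ->
  `|K i j| ^+ 2 <= K i i * K j j.
Proof.
move=> /(psd_cauchy_schwarz (fun k => (k == i)%:R) (fun k => (k == j)%:R)).
by rewrite !sesq_delta.
Qed.

Lemma psd_ext I (K K' : op R I) : K =2 K' -> psd K -> psd K'.
Proof.
move=> E /psdE sK; apply/psdE => u; have := sK u.
by rewrite /sesq; under eq_bigr do under eq_bigr do rewrite E.
Qed.

Definition kraus (T O I : finType) (E : T -> O -> I -> C) (s : op R I) : op R O :=
  fun x y => \sum_t \sum_i \sum_j E t x i * s i j * (E t y j)^*.

Lemma sesq_kraus (T O I : finType) (E : T -> O -> I -> C) (s : op R I) u v :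
  sesq (kraus E s) u v =
  \sum_t sesq s (fun i => \sum_x (E t x i)^* * u x) (fun j => \sum_y (E t y j)^* * v y).
Proof.
rewrite /sesq /kraus.
under eq_bigr => x _ do under eq_bigr => y _ do rewrite mulr_sumr mulr_suml.
under eq_bigr => x _ do rewrite exchange_big /=.
rewrite exchange_big /=; apply: eq_bigr => t _.
under [RHS]eq_bigr => i _ do under eq_bigr => j _ do
  rewrite rmorph_sum /= mulr_suml big_distrlr /=.
rewrite exchange_big2; apply: eq_bigr => x _; apply: eq_bigr => y _.
rewrite mulr_sumr mulr_suml; apply: eq_bigr => i _.
rewrite mulr_sumr mulr_suml; apply: eq_bigr => j _.
rewrite !rmorphM /= conjCK; ring.
Qed.

Lemma psd_kraus (T O I : finType) (E : T -> O -> I -> C) (s : op R I) :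
  psd s -> psd (kraus E s).
Proof.
by move=> /psdE ps; apply/psdE => u; rewrite sesq_kraus; apply: sumr_ge0.
Qed.

Lemma psd_sum_pullback (T O I : finType) (g : T -> O -> I) (K : op R I) :
  psd K -> psd (fun x y => \sum_t K (g t x) (g t y)).
Proof.
move=> /(psd_kraus (fun t x i => (i == g t x)%:R)); apply: psd_ext => x y.
apply: eq_bigr => t _; rewrite (eq_bigr (fun i => (i == g t x)%:R * K i (g t y))).
  by rewrite sum_delta_mull.
move=> i _; rewrite (eq_bigr (fun j => (j == g t y)%:R * ((i == g t x)%:R * K i j))).
  by rewrite sum_delta_mull.
by move=> j _; rewrite conjC_nat; ring.
Qed.

Lemma psd_block_cauchy_schwarz I (Y : finType) (K : op R I) (g h : Y -> I) : psd K ->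
  `|\sum_y K (g y) (h y)| ^+ 2 <= (\sum_y K (g y) (g y)) * (\sum_y K (h y) (h y)).
Proof.
move=> /(psd_sum_pullback (fun y (b : bool) => if b then h y else g y)).
exact: (psd_entry_cauchy_schwarz false true).
Qed.

Definition pullback I J (f : I -> J) (K : op R J) : op R I :=
  fun i i' => K (f i) (f i').

Lemma psd_pullback I J (f : I -> J) (K : op R J) : psd K -> psd (pullback f K).
Proof.
move=> /(psd_sum_pullback (fun (_ : unit) => f)); apply: psd_ext => i i'.
by rewrite (big_pred1 tt) // => -[].
Qed.

Definition ptr1 I J (K : op R (I * J)%type) : op R J := fun j j' => \sum_i K (i, j) (i, j').

Definition ptr2 I J (K : op R (I * J)%type) : op R I := fun i i' => \sum_j K (i, j) (i', j).

Lemma psd_ptr1 I J (K : op R (I * J)%type) : psd K -> psd (ptr1 K).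
Proof. exact: (psd_sum_pullback (fun i j => (i, j))). Qed.

Lemma psd_ptr2 I J (K : op R (I * J)%type) : psd K -> psd (ptr2 K).
Proof. exact: (psd_sum_pullback (fun j i => (i, j))). Qed.

Definition idop I : op R I := fun i j => (i == j)%:R.

Lemma idop_pair I J (x y : (I * J)%type) : idop x y = idop x.1 y.1 * idop x.2 y.2.
Proof. by case: x y => [? ?] [? ?]; rewrite /idop xpair_eqE -natrM mulnb. Qed.

Definition tens (I I' J J' : finType) (F : I -> I' -> C) (G : J -> J' -> C) :
  I * J -> I' * J' -> C := fun x y => F x.1 y.1 * G x.2 y.2.

Lemma psd_spectral J (G : op R J) : psd G ->
  exists (P : 'I_#|J| -> J -> C) (d : 'I_#|J| -> C),
    (forall m, 0 <= d m) /\ forall j j', G j j' = \sum_m (P m j)^* * d m * P m j'.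
Proof.
move=> pG; pose A : 'M[C]_#|J| := \matrix_(r, s) G (enum_val r) (enum_val s).
have /orthomx_spectralP A_spec : A \is normalmx.
  apply/hermitian_normalmx/is_hermitianmxP/matrixP => r s.
  by rewrite !mxE expr0 mul1r (psd_hermitian pG).
set U := spectralmx A in A_spec; set D := spectral_diag A in A_spec.
have /unitarymxP U_unitary : U \is unitarymx := spectral_unitarymx A.
rewrite invmx_unitary ?spectral_unitarymx // in A_spec.
exists (fun m j => U m (enum_rank j)), (fun m => D 0 m); split => [m|j j'].
  have D_diag : U *m A *m map_mx Num.conj U^T = diag_mx D.
    by rewrite A_spec !mulmxA U_unitary mul1mx -mulmxA U_unitary mulmx1.
  have sum_enum (F : J -> C) : \sum_j F j = \sum_(r < #|J|) F (enum_val r).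
    apply: (reindex (@enum_val J (pred_of_simpl predT))).
    by exists (@enum_rank J) => x _; rewrite ?enum_valK ?enum_rankK.
  have -> : D 0 m = (diag_mx D) m m by rewrite mxE eqxx mulr1n.
  rewrite -D_diag (_ : _ m m = sesq G (fun j => (U m (enum_rank j))^*)
                                      (fun j => (U m (enum_rank j))^*)).
    exact: (iffLR (psdE G) pG).
  rewrite mxE /sesq sum_enum; under [LHS]eq_bigr => s _ do rewrite !mxE big_distrl /=.
  rewrite exchange_big /=; apply: eq_big => // r _; rewrite sum_enum.
  by apply: eq_big => // s _; rewrite !mxE !enum_valK conjCK.
have -> : G j j' = A (enum_rank j) (enum_rank j') by rewrite mxE !enum_rankK.
by rewrite A_spec mul_mx_diag !mxE; apply: eq_bigr => m _; rewrite !mxE.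
Qed.

Lemma psd_tens I J (F : op R I) (G : op R J) : psd F -> psd G -> psd (tens F G).
Proof.
move=> /psdE pF /psd_spectral [P [d [d_ge0 G_spec]]]; apply/psdE => v.
pose w m i := \sum_j P m j * v (i, j).
have -> : sesq (tens F G) v v = \sum_m d m * sesq F (w m) (w m).
  rewrite /sesq /tens.
  under eq_bigr => x _ do under eq_bigr => y _ do rewrite G_spec !mulr_sumr mulr_suml.
  under eq_bigr => x _ do rewrite exchange_big /=.
  rewrite exchange_big /=; apply: eq_bigr => m _.
  rewrite mulr_sumr sum_pair; apply: eq_bigr => i _.
  rewrite exchange_big sum_pair mulr_sumr; apply: eq_bigr => i' _.
  rewrite /w rmorph_sum /= !mulr_sumr; apply: eq_bigr => j' _.
  rewrite !mulr_suml mulr_sumr; apply: eq_bigr => j _.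
  rewrite rmorphM /=; ring.
by apply: sumr_ge0 => m _; rewrite mulr_ge0.
Qed.

Definition prob I (rho : op R I) (x : I) : R := Re (rho x x).

Lemma prob_ge0 I (rho : op R I) x : psd rho -> 0 <= prob rho x.
Proof. by move/(psd_diag_ge0 x); rewrite lecE => /andP[]. Qed.

Lemma probE I (rho : op R I) x : psd rho -> rho x x = (prob rho x)%:C%C.
Proof. by move/(psd_diag_ge0 x)/ger0_real/RRe_real. Qed.

Lemma sum_prob I (rho : op R I) : trace rho = 1 -> \sum_x prob rho x = 1.
Proof. by move=> tr; rewrite -raddf_sum /= -/(trace rho) tr. Qed.

Lemma expect_ext I (P P' s s' : op R I) :
  P =2 P' -> s =2 s' -> expect P s = expect P' s'.
Proof.
by move=> eP es; apply: eq_bigr => i _; apply: eq_bigr => j _; rewrite eP es.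
Qed.

Lemma expect_hermitian_real (I : finType) (O rho : op R I) :
  hermitian O -> hermitian rho -> expect O rho = (Re (expect O rho))%:C%C.
Proof.
move=> hO hrho; apply/esym/RRe_real; rewrite CrealE; apply/eqP.
rewrite /expect rmorph_sum exchange_big; apply: eq_bigr => j _.
by rewrite rmorph_sum; apply: eq_bigr => i _; rewrite rmorphM /= -hO -hrho.
Qed.

Lemma Re_expect_mixture I (L : finType) (O rho : op R I) (p : L -> R) (T : L -> op R I) :
  (forall x y, rho x y = \sum_l (p l)%:C%C * T l x y) ->
  Re (expect O rho) = \sum_l p l * Re (expect O (T l)).
Proof.
move=> rhoE; have -> : expect O rho = \sum_l (p l)%:C%C * expect O (T l).
  rewrite /expect; under eq_bigr => i _ do under eq_bigr => j _ do rewrite rhoE mulr_sumr.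
  under eq_bigr => i _ do rewrite exchange_big /=.
  rewrite exchange_big /=; apply: eq_bigr => l _.
  rewrite mulr_sumr; apply: eq_bigr => i _; rewrite mulr_sumr.
  by apply: eq_bigr => j _; ring.
by rewrite raddf_sum; apply: eq_bigr => l _; rewrite /= Re_realM.
Qed.

Lemma expect_idop I (s : op R I) : expect (@idop I) s = trace s.
Proof. by apply: eq_bigr => i _; rewrite sum_delta_mull_sym. Qed.

Lemma expect_tens I J (P F : op R I) (Q G : op R J) :
  expect (tens P Q) (tens F G) = expect P F * expect Q G.
Proof.
rewrite /expect big_distrlr sum_pair; apply: eq_bigr => i1 _; apply: eq_bigr => i2 _.
rewrite sum_pair big_distrlr; apply: eq_bigr => j1 _.
by apply: eq_bigr => j2 _; rewrite /tens /=; ring.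
Qed.

Lemma expect_pullback I J (f : I -> J) (P K : op R J) :
  bijective f -> expect (pullback f P) (pullback f K) = expect P K.
Proof.
move=> f_bij; rewrite /expect [RHS](reindex f); last exact: onW_bij.
by apply: eq_bigr => i _; rewrite [RHS](reindex f) //; apply: onW_bij.
Qed.

Lemma expect_tens_idop I J (P : op R I) (K : op R (I * J)%type) :
  expect (tens P (@idop J)) K = expect P (ptr2 K).
Proof.
rewrite /expect sum_pair; apply: eq_bigr => i _.
under eq_bigr => j _ do rewrite sum_pair.
rewrite exchange_big; apply: eq_bigr => i' _.
rewrite mulr_sumr; apply: eq_bigr => j _.
rewrite (eq_bigr (fun j' => (j == j')%:R * (P i i' * K (i', j') (i, j)))).
  by rewrite sum_delta_mull_sym.
by move=> j' _; rewrite /tens /idop; ring.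
Qed.

Lemma trace_tens I J (F : op R I) (G : op R J) : trace (tens F G) = trace F * trace G.
Proof. by rewrite /trace sum_pair big_distrlr. Qed.

Lemma trace_pullback I J (f : I -> J) (K : op R J) :
  bijective f -> trace (pullback f K) = trace K.
Proof. by move=> f_bij; rewrite /trace (reindex f) //; apply: onW_bij. Qed.

Lemma trace_ptr1 I J (K : op R (I * J)%type) : trace (ptr1 K) = trace K.
Proof. by rewrite /trace sum_pair exchange_big. Qed.

Lemma trace_ptr2 I J (K : op R (I * J)%type) : trace (ptr2 K) = trace K.
Proof. by rewrite /trace sum_pair. Qed.

Lemma ptr1_tens I J (F : op R I) (G : op R J) j j' :
  ptr1 (tens F G) j j' = trace F * G j j'.
Proof. by rewrite /ptr1 /trace mulr_suml. Qed.

Lemma ptr2_tens I J (F : op R I) (G : op R J) i i' :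
  ptr2 (tens F G) i i' = F i i' * trace G.
Proof. by rewrite /ptr2 /trace mulr_sumr. Qed.

Definition dual (T O I : finType) (E : T -> O -> I -> C) (P : op R O) : op R I :=
  fun i j => \sum_t \sum_x \sum_y (E t x i)^* * P x y * E t y j.

Lemma expect_kraus (T O I : finType) (E : T -> O -> I -> C) (P : op R O) (s : op R I) :
  expect P (kraus E s) = expect (dual E P) s.
Proof.
rewrite /expect /kraus /dual.
under eq_bigr => x _ do under eq_bigr => y _ do rewrite mulr_sumr.
under eq_bigr => x _ do rewrite exchange_big.
rewrite exchange_big.
under [RHS]eq_bigr => i _ do under eq_bigr => j _ do rewrite mulr_suml.
under [RHS]eq_bigr => i _ do rewrite exchange_big.
rewrite [RHS]exchange_big; apply: eq_bigr => t _.
under eq_bigr => x _ do under eq_bigr => y _ do rewrite mulr_sumr.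
under eq_bigr => x _ do under eq_bigr => y _ do
  under eq_bigr => i _ do rewrite mulr_sumr.
under [RHS]eq_bigr => i _ do under eq_bigr => j _ do rewrite mulr_suml.
under [RHS]eq_bigr => i _ do under eq_bigr => j _ do
  under eq_bigr => x _ do rewrite mulr_suml.
rewrite exchange_big2 exchange_big; apply: eq_bigr => j _; apply: eq_bigr => i _.
by apply: eq_bigr => x _; apply: eq_bigr => y _; ring.
Qed.

Lemma dual_id2 (T I : finType) (E : T -> bool -> I -> C) :
  is_channel E -> dual E (id2 R) =2 @idop I.
Proof.
move=> chE i j; rewrite /idop /id2 -chE; apply: eq_bigr => t _; apply: eq_bigr => x _.
rewrite (eq_bigr (fun y => (y == x)%:R * ((E t x i)^* * E t y j))).
  by rewrite sum_delta_mull conjcE.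
by move=> y _; rewrite eq_sym; ring.
Qed.

Lemma expect_dual_id2 (T I : finType) (E : T -> bool -> I -> C) (s : op R I) :
  is_channel E -> expect (dual E (id2 R)) s = trace s.
Proof. by move=> chE; rewrite -expect_idop; apply: expect_ext => //; apply: dual_id2. Qed.

Definition ktens (T1 T2 O1 O2 I1 I2 : finType)
    (E : T1 -> O1 -> I1 -> C) (F : T2 -> O2 -> I2 -> C) :
  T1 * T2 -> O1 * O2 -> I1 * I2 -> C := fun t => tens (E t.1) (F t.2).

Lemma dual_ktens (T1 T2 O1 O2 I1 I2 : finType)
    (E : T1 -> O1 -> I1 -> C) (F : T2 -> O2 -> I2 -> C) (P : op R O1) (Q : op R O2) :
  dual (ktens E F) (tens P Q) =2 tens (dual E P) (dual F Q).
Proof.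
move=> i j; rewrite /tens /dual sum_pair_mul; apply: eq_bigr => t _.
rewrite sum_pair_mul; apply: eq_bigr => x _; rewrite sum_pair_mul; apply: eq_bigr => y _.
by rewrite /ktens /tens rmorphM /=; ring.
Qed.

Definition decorrelate I J (K : op R (I * J)%type) : op R (I * J)%type :=
  tens (ptr2 K) (ptr1 K).

Lemma is_state_decorrelate I J (K : op R (I * J)%type) :
  is_state K -> is_state (decorrelate K).
Proof.
case=> pK trK; split; first by apply: psd_tens; [apply: psd_ptr2 | apply: psd_ptr1].
by rewrite trace_tens trace_ptr1 trace_ptr2 trK mulr1.
Qed.

Lemma ptr1_decorrelate I J (K : op R (I * J)%type) :
  trace K = 1 -> ptr1 (decorrelate K) =2 ptr1 K.
Proof. by move=> trK j j'; rewrite ptr1_tens trace_ptr2 trK mul1r. Qed.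

Lemma ptr2_decorrelate I J (K : op R (I * J)%type) :
  trace K = 1 -> ptr2 (decorrelate K) =2 ptr2 K.
Proof. by move=> trK i i'; rewrite ptr2_tens trace_ptr1 trK mulr1. Qed.

Section TripleSystems.
Variables I1 I2 I3 : finType.

Definition last_to_first (x : (I2 * I3) * I1) : (I1 * I2) * I3 := ((x.2, x.1.1), x.1.2).

Definition last_to_middle (x : (I1 * I3) * I2) : (I1 * I2) * I3 := ((x.1.1, x.2), x.1.2).

Lemma last_to_first_bij : bijective last_to_first.
Proof. by exists (fun y => ((y.1.2, y.2), y.1.1)) => [[[? ?] ?]|[[? ?] ?]]. Qed.

Lemma last_to_middle_bij : bijective last_to_middle.
Proof. by exists (fun y => ((y.1.1, y.2), y.1.2)) => [[[? ?] ?]|[[? ?] ?]]. Qed.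

Definition ptr_first (K : op R ((I1 * I2) * I3)%type) := ptr2 (pullback last_to_first K).

Definition ptr_middle (K : op R ((I1 * I2) * I3)%type) := ptr2 (pullback last_to_middle K).

Lemma expect_idop_first (Q : op R I2) (S : op R I3) (K : op R ((I1 * I2) * I3)%type) :
  expect (tens (tens (@idop I1) Q) S) K = expect (tens Q S) (ptr_first K).
Proof.
rewrite -(expect_pullback _ _ last_to_first_bij) -expect_tens_idop.
by apply: expect_ext => // x y; rewrite /pullback /tens /=; ring.
Qed.

Lemma expect_idop_middle (P : op R I1) (S : op R I3) (K : op R ((I1 * I2) * I3)%type) :
  expect (tens (tens P (@idop I2)) S) K = expect (tens P S) (ptr_middle K).
Proof.
rewrite -(expect_pullback _ _ last_to_middle_bij) -expect_tens_idop.
by apply: expect_ext => // x y; rewrite /pullback /tens /=; ring.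
Qed.
End TripleSystems.
End Operators.

Section ThreeQubits.
Variable R : rcfType.
Local Notation X3 := (bool * bool * bool)%type.
Implicit Types rho : op R X3.

Lemma sum_X3 (T : nmodType) (F : X3 -> T) :
  \sum_x F x = \sum_(b : bool) \sum_(y : bool * bool) F ((b, y.1), y.2).
Proof. by rewrite sum_pair sum_pair; apply: eq_bigr => b _; rewrite sum_pair. Qed.

Lemma hermitian_tens3 (P Q S : op R bool) :
  hermitian P -> hermitian Q -> hermitian S -> hermitian (tens3 P Q S).
Proof. by move=> hP hQ hS x y; rewrite /tens3 hP hQ hS !rmorphM. Qed.

Lemma hermitian_pauliX : hermitian (pauliX R).
Proof. by case=> [] []; rewrite /pauliX /= ?conjC0 ?conjC1. Qed.

Lemma hermitian_pauliZ : hermitian (pauliZ R).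
Proof. by case=> [] []; rewrite /pauliZ /= ?conjC0 ?conjC1 ?rmorphN1. Qed.

Lemma hermitian_id2 : hermitian (id2 R).
Proof. by case=> [] []; rewrite /id2 /= ?conjC0 ?conjC1. Qed.

Definition diag_op (I : finType) (f : I -> R) : op R I :=
  fun i j => (i == j)%:R * (f i)%:C%C.

Lemma pauliZE : pauliZ R =2 diag_op (fun b : bool => (-1) ^+ b).
Proof. by case=> [] []; rewrite /pauliZ /diag_op /= ?mul1r ?mul0r ?rmorphN ?rmorph1. Qed.

Lemma id2E : id2 R =2 diag_op (fun _ : bool => 1).
Proof. by case=> [] []; rewrite /id2 /diag_op /= ?mul1r ?mul0r ?rmorph1. Qed.

Lemma Re_expect_tens3_diag rho (f1 f2 f3 : bool -> R) (P Q S : op R bool) :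
  P =2 diag_op f1 -> Q =2 diag_op f2 -> S =2 diag_op f3 ->
  Re (expect (tens3 P Q S) rho) = \sum_x f1 x.1.1 * f2 x.1.2 * f3 x.2 * prob rho x.
Proof.
move=> eP eQ eS; rewrite /expect raddf_sum; apply: eq_bigr => x _.
rewrite (eq_bigr (fun y => (x == y)%:R * ((f1 x.1.1 * f2 x.1.2 * f3 x.2)%:C%C * rho y x))).
  by rewrite sum_delta_mull_sym /= Re_realM.
move=> y _; rewrite /tens3 eP eQ eS /diag_op -[(x == y)%:R]/(idop R x y).
by rewrite idop_pair [idop R x.1 y.1]idop_pair /idop !rmorphM; ring.
Qed.

Lemma Re_expect_ZZ_chain_le1 rho : is_state rho ->
  Re (expect (tens3 (pauliZ R) (pauliZ R) (id2 R)) rho)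
  + Re (expect (tens3 (id2 R) (pauliZ R) (pauliZ R)) rho)
  - Re (expect (tens3 (pauliZ R) (id2 R) (pauliZ R)) rho) <= 1.
Proof.
case=> pr tr; rewrite (Re_expect_tens3_diag _ pauliZE pauliZE id2E).
rewrite (Re_expect_tens3_diag _ id2E pauliZE pauliZE).
rewrite (Re_expect_tens3_diag _ pauliZE id2E pauliZE) -[X in _ <= X](sum_prob tr).
rewrite -big_split -sumrB /=; apply: ler_sum => x _.
rewrite -mulrDl -mulrBl ler_piMl ?prob_ge0 //.
by rewrite !mulr1 !mul1r sign_chain_le1.
Qed.

Lemma norm_Re_expect_diag_le1 rho (P Q S : op R bool) (f1 f2 f3 : bool -> R) :
  is_state rho -> P =2 diag_op f1 -> Q =2 diag_op f2 -> S =2 diag_op f3 ->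
  (forall x : X3, `|f1 x.1.1 * f2 x.1.2 * f3 x.2| <= 1) ->
  `|Re (expect (tens3 P Q S) rho)| <= 1.
Proof.
case=> pr tr eP eQ eS f_le1; rewrite (Re_expect_tens3_diag _ eP eQ eS).
rewrite -[X in _ <= X](sum_prob tr).
apply: (le_trans (ler_norm_sum _ _ _)); apply: ler_sum => x _.
by rewrite normrM (ger0_norm (prob_ge0 _ pr)) ler_piMl ?prob_ge0.
Qed.

Definition flip3 (x : X3) : X3 := ((~~ x.1.1, ~~ x.1.2), ~~ x.2).

Lemma expect_XXX rho :
  expect (tens3 (pauliX R) (pauliX R) (pauliX R)) rho = \sum_x rho (flip3 x) x.
Proof.
apply: eq_bigr => x _; rewrite (eq_bigr (fun y => (y == flip3 x)%:R * rho y x)).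
  by rewrite sum_delta_mull.
move=> y _; congr (_ * _).
by case: x y => [[[] []] []] [[[] []] []]; rewrite /tens3 /pauliX /= ?mulr1 ?mulr0 ?mul0r.
Qed.

Lemma Re_expect_XXX_ZII_le1 rho : is_state rho ->
  Re (expect (tens3 (pauliX R) (pauliX R) (pauliX R)) rho) ^+ 2
  + Re (expect (tens3 (pauliZ R) (id2 R) (id2 R)) rho) ^+ 2 <= 1.
Proof.
case=> pr tr; pose P b := \sum_(y : bool * bool) prob rho ((b, y.1), y.2).
pose z b := \sum_(y : bool * bool) rho (flip3 ((b, y.1), y.2)) ((b, y.1), y.2).
have P_ge0 b : 0 <= P b by apply: sumr_ge0 => y _; apply: prob_ge0.
have P_sum : P false + P true = 1 by rewrite -(sum_prob tr) sum_X3 big_bool addrC.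
have ZII : Re (expect (tens3 (pauliZ R) (id2 R) (id2 R)) rho) = P false - P true.
  rewrite (Re_expect_tens3_diag _ pauliZE id2E id2E) sum_X3 big_bool /= addrC -sumrN.
  by congr (_ + _); apply: eq_bigr => y _; rewrite ?expr0 ?expr1 !mulr1 ?mul1r ?mulN1r.
have XXX :
    Re (expect (tens3 (pauliX R) (pauliX R) (pauliX R)) rho) = Re (z false) + Re (z true).
  by rewrite expect_XXX sum_X3 big_bool raddfD addrC.
have z_bound b : Re (z b) ^+ 2 <= P (~~ b) * P b.
  have := psd_block_cauchy_schwarz (fun y : bool * bool => flip3 ((b, y.1), y.2))
    (fun y => ((b, y.1), y.2)) pr.
  rewrite -/(z b) -add_Re2_Im2.
  have blockE c : \sum_(y : bool * bool) rho ((c, y.1), y.2) ((c, y.1), y.2) = (P c)%:C%C.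
    by rewrite rmorph_sum; apply: eq_bigr => y _; rewrite probE.
  rewrite blockE (reindex (fun y : bool * bool => (~~ y.1, ~~ y.2))) /=; last first.
    by exists (fun y : bool * bool => (~~ y.1, ~~ y.2)) => -[? ?] _; rewrite /= !negbK.
  under eq_bigr => y _ do rewrite /flip3 /= !negbK.
  rewrite blockE -rmorphM lecR; apply: le_trans.
  by rewrite lerDl sqr_ge0.
rewrite XXX ZII; have := z_bound false; have := z_bound true => /=.
have := P_ge0 false; have := P_ge0 true; have := sqr_ge0 (Re (z false) - Re (z true)).
move: (Re (z false)) (Re (z true)) (P false) (P true) P_sum => u v p0 p1; nra.
Qed.
End ThreeQubits.

Section Triangle.
Variable R : rcfType.
Local Notation C := R[i].
Variables aB aC bA bC cA cB : finType.
Local Notation IA := (bA * cA)%type.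
Local Notation IB := (aB * cB)%type.
Local Notation IC := (aC * bC)%type.
Local Notation J := ((IA * IB) * IC)%type.

(* [tri_out] indexes the input of party A by (bA, cA), of B by (aB, cB) and of C by
   (aC, bC); [route] regroups these indices by source. *)
Definition route (i : J) : (aB * aC) * (bA * bC) * (cA * cB) :=
  ((i.1.2.1, i.2.1), (i.1.1.1, i.2.2), (i.1.1.2, i.1.2.2)).

Lemma route_bij : bijective route.
Proof.
exists (fun s => ((s.1.2.1, s.2.1), (s.1.1.1, s.2.2), (s.1.1.2, s.1.2.2))).
  by move=> [[[? ?] [? ?]] [? ?]].
by move=> [[[? ?] [? ?]] [? ?]].
Qed.

Definition sources (ra : op R (aB * aC)%type) (rb : op R (bA * bC)%type)
    (rc : op R (cA * cB)%type) : op R J :=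
  pullback route (tens (tens ra rb) rc).

Section Sources.
Variables (ra : op R (aB * aC)%type) (rb : op R (bA * bC)%type) (rc : op R (cA * cB)%type).

Lemma is_state_sources : is_state ra -> is_state rb -> is_state rc ->
  is_state (sources ra rb rc).
Proof.
move=> [pa ta] [pb tb] [pc tc]; split.
  by apply/psd_pullback/psd_tens => //; apply: psd_tens.
rewrite trace_pullback; last exact: route_bij.
by rewrite !trace_tens ta tb tc !mul1r.
Qed.

Lemma ptr2_sources (x y : (IA * IB)%type) :
  ptr2 (sources ra rb rc) x y =
  ptr2 ra x.2.1 y.2.1 * ptr2 rb x.1.1 y.1.1 * rc (x.1.2, x.2.2) (y.1.2, y.2.2).
Proof.
rewrite {1}/ptr2 sum_pair big_distrlr mulr_suml; apply: eq_bigr => a _.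
by rewrite mulr_suml.
Qed.

Lemma ptr_first_sources (x y : (IB * IC)%type) :
  ptr_first (sources ra rb rc) x y =
  ra (x.1.1, x.2.1) (y.1.1, y.2.1) * ptr1 rb x.2.2 y.2.2 * ptr1 rc x.1.2 y.1.2.
Proof.
rewrite {1}/ptr_first /ptr2 sum_pair -mulrA big_distrlr mulr_sumr; apply: eq_bigr => b _.
by rewrite mulr_sumr; apply: eq_bigr => c _; rewrite /sources /pullback /tens /=; ring.
Qed.

Lemma ptr_middle_sources (x y : (IA * IC)%type) :
  ptr_middle (sources ra rb rc) x y =
  ptr1 ra x.2.1 y.2.1 * rb (x.1.1, x.2.2) (y.1.1, y.2.2) * ptr2 rc x.1.2 y.1.2.
Proof.
rewrite {1}/ptr_middle /ptr1 /ptr2 sum_pair mulrAC big_distrlr mulr_suml.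
apply: eq_bigr => a _.
by rewrite mulr_suml; apply: eq_bigr => c _; rewrite /sources /pullback /tens /=; ring.
Qed.
End Sources.

Lemma tri_outE (KA KB KC : finType) (EA : KA -> bool -> IA -> C)
    (EB : KB -> bool -> IB -> C) (EC : KC -> bool -> IC -> C) ra rb rc :
  tri_out EA EB EC ra rb rc =2 kraus (ktens (ktens EA EB) EC) (sources ra rb rc).
Proof.
move=> x y; rewrite /kraus !sum_pair; do 5!(apply: eq_bigr => ? _).
by rewrite /ktens /tens /pullback !conjcE !rmorphM.
Qed.

Section Channels.
Variables (KA KB KC : finType) (EA : KA -> bool -> IA -> C)
  (EB : KB -> bool -> IB -> C) (EC : KC -> bool -> IC -> C).

Lemma expect_tri_out ra rb rc (P Q S : op R bool) :
  expect (tens3 P Q S) (tri_out EA EB EC ra rb rc) =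
  expect (tens (tens (dual EA P) (dual EB Q)) (dual EC S)) (sources ra rb rc).
Proof.
rewrite (expect_ext (P' := tens (tens P Q) S) (fun _ _ => erefl) (tri_outE _ _ _ _ _ _)).
by rewrite expect_kraus; apply: expect_ext => // x y; rewrite dual_ktens /tens dual_ktens.
Qed.

Hypotheses (chA : is_channel EA) (chB : is_channel EB) (chC : is_channel EC).

Lemma expect_tri_out_idC ra rb rc (P Q : op R bool) :
  expect (tens3 P Q (id2 R)) (tri_out EA EB EC ra rb rc) =
  expect (tens (dual EA P) (dual EB Q)) (ptr2 (sources ra rb rc)).
Proof.
rewrite expect_tri_out -expect_tens_idop.
by apply: expect_ext => // x y; rewrite /tens dual_id2.
Qed.

Lemma expect_tri_out_idA ra rb rc (Q S : op R bool) :
  expect (tens3 (id2 R) Q S) (tri_out EA EB EC ra rb rc) =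
  expect (tens (dual EB Q) (dual EC S)) (ptr_first (sources ra rb rc)).
Proof.
rewrite expect_tri_out -expect_idop_first.
by apply: expect_ext => // x y; rewrite /tens dual_id2.
Qed.

Lemma expect_tri_out_idB ra rb rc (P S : op R bool) :
  expect (tens3 P (id2 R) S) (tri_out EA EB EC ra rb rc) =
  expect (tens (dual EA P) (dual EC S)) (ptr_middle (sources ra rb rc)).
Proof.
rewrite expect_tri_out -expect_idop_middle.
by apply: expect_ext => // x y; rewrite /tens dual_id2.
Qed.

Lemma is_state_tri_out ra rb rc : is_state ra -> is_state rb -> is_state rc ->
  is_state (tri_out EA EB EC ra rb rc).
Proof.
move=> sa sb sc; have [ps trs] := is_state_sources sa sb sc.
split; first by apply: psd_ext (psd_kraus _ ps) => x y; rewrite tri_outE.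
rewrite -trs -!expect_idop.
rewrite (expect_ext (P' := tens3 (id2 R) (id2 R) (id2 R)) _ (fun _ _ => erefl)).
  rewrite expect_tri_out_idC -expect_tens_idop; apply: expect_ext => // x y.
  by rewrite /tens !dual_id2 // [RHS]idop_pair [X in _ = X * _]idop_pair.
by move=> x y; rewrite idop_pair [X in X * _]idop_pair.
Qed.

Section Decorrelation.
Variables (ra : op R (aB * aC)%type) (rb : op R (bA * bC)%type) (rc : op R (cA * cB)%type).
Hypotheses (sa : is_state ra) (sb : is_state rb) (sc : is_state rc).
Local Notation T0 := (tri_out EA EB EC ra rb rc).
Local Notation T1 := (tri_out EA EB EC ra (decorrelate rb) rc).

Lemma expect_decorrelate_idC (P Q : op R bool) :
  expect (tens3 P Q (id2 R)) T1 = expect (tens3 P Q (id2 R)) T0.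
Proof.
rewrite !expect_tri_out_idC; apply: expect_ext => // x y.
by rewrite !ptr2_sources ptr2_decorrelate //; case: sb.
Qed.

Lemma expect_decorrelate_idA (Q S : op R bool) :
  expect (tens3 (id2 R) Q S) T1 = expect (tens3 (id2 R) Q S) T0.
Proof.
rewrite !expect_tri_out_idA; apply: expect_ext => // x y.
by rewrite !ptr_first_sources ptr1_decorrelate //; case: sb.
Qed.

Lemma expect_decorrelate_idB (P S : op R bool) :
  expect (tens3 P (id2 R) S) T1 =
  expect (tens3 P (id2 R) (id2 R)) T0 * expect (tens3 (id2 R) (id2 R) S) T0.
Proof.
pose FA := tens (ptr2 rb) (ptr2 rc); pose FC := tens (ptr1 ra) (ptr1 rb).
have T1E P' S' :
    expect (tens3 P' (id2 R) S') T1 = expect (dual EA P') FA * expect (dual EC S') FC.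
  rewrite expect_tri_out_idB -expect_tens; apply: expect_ext => // x y.
  by rewrite ptr_middle_sources /FA /FC /decorrelate /tens /=; ring.
case: sa sb sc => [_ tra] [_ trb] [_ trc].
have trFA : trace FA = 1 by rewrite trace_tens !trace_ptr2 trb trc mulr1.
have trFC : trace FC = 1 by rewrite trace_tens !trace_ptr1 tra trb mulr1.
rewrite -expect_decorrelate_idC -expect_decorrelate_idA !T1E.
by rewrite !expect_dual_id2 // trFA trFC mulr1 mul1r.
Qed.

Lemma tri_out_ZZ_le_ZII :
  Re (expect (tens3 (pauliZ R) (pauliZ R) (id2 R)) T0)
  + Re (expect (tens3 (id2 R) (pauliZ R) (pauliZ R)) T0) - 1
  <= `|Re (expect (tens3 (pauliZ R) (id2 R) (id2 R)) T0)|.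
Proof.
have [pt _] := is_state_tri_out sa sb sc.
have := Re_expect_ZZ_chain_le1 (is_state_tri_out sa (is_state_decorrelate sb) sc).
rewrite expect_decorrelate_idC // expect_decorrelate_idA // expect_decorrelate_idB //.
have hZ := hermitian_pauliZ R; have hI := hermitian_id2 R.
rewrite (expect_hermitian_real (hermitian_tens3 hZ hI hI) (psd_hermitian pt)).
rewrite (expect_hermitian_real (hermitian_tens3 hI hI hZ) (psd_hermitian pt)).
rewrite -rmorphM /=.
set a := Re (expect (tens3 (pauliZ R) (id2 R) (id2 R)) T0).
set c := Re (expect (tens3 (id2 R) (id2 R) (pauliZ R)) T0) => chain.
have c_le1 : `|c| <= 1.
  apply: (norm_Re_expect_diag_le1 (is_state_tri_out sa sb sc) (id2E R) (id2E R) (pauliZE R)).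
  by move=> x; rewrite !mul1r normr_sign.
have : a * c <= `|a| by rewrite (le_trans (ler_norm _)) // normrM ler_piMr.
move: chain; lra.
Qed.
End Decorrelation.
End Channels.
End Triangle.

Theorem mainTheorem6 (R : rcfType) (rho : op R (bool * bool * bool)%type) :
  is_state rho ->
  triangle_preparable rho ->
  0 <= expect (tens3 (pauliZ R) (pauliZ R) (id2 R)) rho
       + expect (tens3 (id2 R) (pauliZ R) (pauliZ R)) rho - 1 ->
  (expect (tens3 (pauliX R) (pauliX R) (pauliX R)) rho) ^+ 2
  + (expect (tens3 (pauliZ R) (pauliZ R) (id2 R)) rho
     + expect (tens3 (id2 R) (pauliZ R) (pauliZ R)) rho - 1) ^+ 2 <= 1.
Proof.
move=> [prho _] [aB [aC [bA [bC [cA [cB [ra [rb [rc [[sa sb sc]]]]]]]]]]].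
move=> [L [KA [KB [KC [p [EA [EB [EC [p_ge0 p_sum1 chan rhoE]]]]]]]]].
have hX := hermitian_pauliX R; have hZ := hermitian_pauliZ R; have hI := hermitian_id2 R.
have hrho := psd_hermitian prho.
rewrite (expect_hermitian_real (hermitian_tens3 hX hX hX) hrho).
rewrite (expect_hermitian_real (hermitian_tens3 hZ hZ hI) hrho).
rewrite (expect_hermitian_real (hermitian_tens3 hI hZ hZ) hrho).
rewrite -(rmorph1 (real_complex R)) -!rmorphD -!rmorphB -!rmorphXn -rmorphD ler0c lecR.
have mixE (f g : L -> R) :
    \sum_l p l * f l + \sum_l p l * g l - 1 = \sum_l p l * (f l + g l - 1).
  by rewrite -big_split /= -[X in _ - X]p_sum1 -sumrB; apply: eq_bigr => l _; ring.
rewrite !(Re_expect_mixture _ rhoE) mixE.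
have t_state l := is_state_tri_out (chan l).1 (chan l).2.1 (chan l).2.2 sa sb sc.
apply: (convex_disk_bound p_ge0 p_sum1) => l.
  exact: Re_expect_XXX_ZII_le1 (t_state l).
by case: (chan l) => chA [chB chC]; apply: tri_out_ZZ_le_ZII.
Qed.
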